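(* The space $C([a,b],\mathbb{R}_\mathcal{I})$ of continuous interval-valued functions on $[a,b]$, with pointwise operations and the norm $\|\bar f\|_\infty=\max_{x\in[a,b]}\|\bar f(x)\|$, is a Banach space.
   Context: An interval number is a closed interval $\bar a=[a_l,a_r]$ with $a_l<a_r$ real; $\mathbb{R}_\mathcal{I}$ is the set of interval numbers. Write $a_c=(a_l+a_r)/2$, $a_w=(a_r-a_l)/2>0$, $\bar a=\langle a_c;a_w\rangle=[a_c-a_w,a_c+a_w]$. Operations: $\bar a+\bar b=\langle a_c+b_c;a_wb_w\rangle$, $k\bar a=\langle ka_c;a_w^k\rangle$, $\bar a-\bar b=\langle a_c-b_c;a_w/b_w\rangle$; norm $\|\bar a\|=\sqrt{a_c^2+\ln^2a_w}$; distance $d(\bar a,\bar b)=\|\bar a-\bar b\|$. Continuity of $\bar f:[a,b]\to\mathbb{R}_\mathcal{I}$ is with respect to $d$. Pointwise operations: $(\bar f+\bar g)(x)=\bar f(x)+\bar g(x)$, $(k\bar f)(x)=k\bar f(x)$. *)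

From Stdlib Require Import Reals Lra.
From Coquelicot Require Import Coquelicot.
Open Scope R_scope.

(* An interval number <c; w> = [c - w, c + w] with w > 0 (center/radius form). *)
Record Inum := mkI { ic : R; iw : R; iw_pos : 0 < iw }.

Definition Iadd (a b : Inum) : Inum :=
  mkI (ic a + ic b) (iw a * iw b) (Rmult_lt_0_compat _ _ (iw_pos a) (iw_pos b)).

Definition Iscal (k : R) (a : Inum) : Inum :=
  mkI (k * ic a) (Rpower (iw a) k) (exp_pos _).

Definition Isub (a b : Inum) : Inum :=
  mkI (ic a - ic b) (iw a / iw b)
      (Rdiv_lt_0_compat _ _ (iw_pos a) (iw_pos b)).

Definition Inorm (a : Inum) : R := sqrt (ic a ^ 2 + ln (iw a) ^ 2).

Definition Idist (a b : Inum) : R := Inorm (Isub a b).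

Definition Dom (a b : R) : Type := {x : R | a <= x <= b}.

Definition IFun (a b : R) : Type := Dom a b -> Inum.

Definition Izero : Inum := mkI 0 1 Rlt_0_1.

Definition Fzero {a b : R} : IFun a b := fun _ => Izero.
Definition Fadd {a b : R} (f g : IFun a b) : IFun a b := fun x => Iadd (f x) (g x).
Definition Fscal {a b : R} (k : R) (f : IFun a b) : IFun a b := fun x => Iscal k (f x).
Definition Fsub {a b : R} (f g : IFun a b) : IFun a b := fun x => Isub (f x) (g x).

Definition Icontinuous {a b : R} (f : IFun a b) : Prop :=
  forall (x : Dom a b) (eps : R), 0 < eps ->
    exists delta : R, 0 < delta /\
      forall y : Dom a b, Rabs (proj1_sig y - proj1_sig x) < delta ->
        Idist (f y) (f x) < eps.

Definition Supnorm {a b : R} (f : IFun a b) : R :=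
  real (Lub_Rbar (fun y => exists x : Dom a b, y = Inorm (f x))).

From Stdlib Require Import Reals Lra ProofIrrelevance FunctionalExtensionality.
From Coquelicot Require Import Coquelicot.
Open Scope R_scope.

(* The map u |-> (u_c, ln u_w) is a bijection from R_I onto R^2 which turns
   the operations +, k . and - of R_I into the vector operations of R^2 and
   the norm of R_I into the Euclidean norm.  Hence C([a,b], R_I) is an
   isometric copy of C([a,b], R^2) with the sup norm, and everything reduces
   to classical facts: a continuous function on [a,b] attains the maximum of
   its norm, a uniformly Cauchy sequence of functions into the complete space
   R^2 converges uniformly, and a uniform limit of continuous functions is
   continuous. *)

Lemma minus_plus_plus {G : AbelianGroup} (u v u' v' : G) :
  minus (plus u v) (plus u' v') = plus (minus u u') (minus v v').
Proof.
  unfold minus. rewrite opp_plus, !plus_assoc. f_equal.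
  rewrite <- !plus_assoc. f_equal. apply plus_comm.
Qed.

Lemma norm_minus_sym {K : AbsRing} {V : NormedModule K} (x y : V) :
  norm (minus x y) = norm (minus y x).
Proof. now rewrite <- opp_minus, norm_opp. Qed.

Lemma norm_scal_R {V : NormedModule R_AbsRing} (k : R) (x : V) :
  norm (scal k x) = Rabs k * norm x.
Proof.
  apply Rle_antisym; [exact (norm_scal k x)|].
  destruct (Req_dec k 0) as [-> | Hk].
  { rewrite Rabs_R0, Rmult_0_l. apply norm_ge_0. }
  assert (Hx : norm x <= Rabs (/ k) * norm (scal k x)).
  { replace x with (scal (/ k) (scal k x)) at 1 by
      (rewrite scal_assoc; change (mult (/ k) k) with (/ k * k);
       rewrite Rinv_l by exact Hk; exact (scal_one x)).
    exact (norm_scal (/ k) (scal k x)). }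
  rewrite Rabs_inv in Hx.
  apply Rmult_le_compat_l with (r := Rabs k) in Hx; [|apply Rabs_pos].
  rewrite <- Rmult_assoc, Rinv_r, Rmult_1_l in Hx by now apply Rabs_no_R0.
  exact Hx.
Qed.

Lemma uniformly_Cauchy_limit {T : Type} {V : CompleteNormedModule R_AbsRing}
    (u : nat -> T -> V) :
  (forall eps, 0 < eps -> exists N, forall m n, (N <= m)%nat -> (N <= n)%nat ->
     forall t, norm (minus (u m t) (u n t)) < eps) ->
  exists v : T -> V, forall eps, 0 < eps -> exists N, forall n, (N <= n)%nat ->
     forall t, norm (minus (u n t) (v t)) < eps.
Proof.
  intros Hcauchy.
  set (F := filtermap u eventually).
  assert (HF : ProperFilter F) by apply filtermap_proper_filter, eventually_filter.
  assert (HFc : cauchy F).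
  { intros eps. destruct (Hcauchy eps (cond_pos eps)) as [N HN].
    exists (u N), N. intros n Hn t.
    apply (norm_compat1 (V := V)), HN; [assumption | constructor]. }
  exists (lim F). intros eps Heps.
  pose proof (@norm_factor_gt_0 R_AbsRing V) as Hc.
  set (c := @norm_factor R_AbsRing V) in Hc |- *.
  assert (Heps' : 0 < eps / c) by now apply Rdiv_lt_0_compat.
  destruct (complete_cauchy F HF HFc (mkposreal _ Heps')) as [N HN].
  exists N. intros n Hn t.
  replace eps with (c * (eps / c)) by (field; lra).
  exact (norm_compat2 (V := V) _ _ (mkposreal _ Heps') (HN n Hn t)).
Qed.

Section Domain.

Variables a b : R.
Context {V : NormedModule R_AbsRing}.

Definition Dcontinuous (F : Dom a b -> V) : Prop :=
  forall (x : Dom a b) (eps : R), 0 < eps ->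
    exists delta : R, 0 < delta /\
      forall y : Dom a b, Rabs (proj1_sig y - proj1_sig x) < delta ->
        norm (minus (F y) (F x)) < eps.

Lemma Dcontinuous_const (c : V) : Dcontinuous (fun _ => c).
Proof.
  intros x eps Heps. exists 1. split; [lra|].
  intros y _. replace (norm (minus c c)) with 0 by
    (rewrite minus_eq_zero; symmetry; apply norm_zero).
  exact Heps.
Qed.

Lemma Dcontinuous_plus (F G : Dom a b -> V) :
  Dcontinuous F -> Dcontinuous G -> Dcontinuous (fun x => plus (F x) (G x)).
Proof.
  intros HF HG x eps Heps.
  destruct (HF x (eps / 2)) as [d1 [Hd1 H1]]; [lra|].
  destruct (HG x (eps / 2)) as [d2 [Hd2 H2]]; [lra|].
  exists (Rmin d1 d2). split; [now apply Rmin_pos|].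
  intros y Hy. rewrite (minus_plus_plus (G := V)).
  specialize (H1 y (Rlt_le_trans _ _ _ Hy (Rmin_l _ _))).
  specialize (H2 y (Rlt_le_trans _ _ _ Hy (Rmin_r _ _))).
  eapply Rle_lt_trans; [apply norm_triangle | lra].
Qed.

Lemma Dcontinuous_scal (k : R) (F : Dom a b -> V) :
  Dcontinuous F -> Dcontinuous (fun x => scal k (F x)).
Proof.
  intros HF x eps Heps.
  set (K := Rabs k + 1).
  assert (HK : 0 < K) by (pose proof (Rabs_pos k); unfold K; lra).
  destruct (HF x (eps / K)) as [d [Hd H]]; [now apply Rdiv_lt_0_compat|].
  exists d. split; [exact Hd|]. intros y Hy.
  specialize (H y Hy).
  rewrite <- (scal_minus_distr_l (V := V)), norm_scal_R.
  apply Rle_lt_trans with (K * norm (minus (F y) (F x))).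
  { apply Rmult_le_compat_r; [apply norm_ge_0 | unfold K; lra]. }
  replace eps with (K * (eps / K)) by (field; lra).
  now apply Rmult_lt_compat_l.
Qed.

Lemma Dcontinuous_uniform_limit (u : nat -> Dom a b -> V) (F : Dom a b -> V) :
  (forall n, Dcontinuous (u n)) ->
  (forall eps, 0 < eps -> exists n, forall x, norm (minus (u n x) (F x)) < eps) ->
  Dcontinuous F.
Proof.
  intros Hu Hlim x eps Heps.
  destruct (Hlim (eps / 3)) as [n Hn]; [lra|].
  destruct (Hu n x (eps / 3)) as [d [Hd H]]; [lra|].
  exists d. split; [exact Hd|]. intros y Hy.
  rewrite (minus_trans (G := V) (u n y)), (minus_trans (G := V) (u n x) (u n y)).
  pose proof (Hn x) as Hx. pose proof (Hn y) as Hy'. specialize (H y Hy).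
  rewrite norm_minus_sym in Hy'.
  eapply Rle_lt_trans; [apply norm_triangle|].
  eapply Rle_lt_trans; [apply Rplus_le_compat_l, norm_triangle | lra].
Qed.

Hypothesis hab : a <= b.

(* Extending functions on [a,b] to R by clamping lets [continuity_ab_maj],
   which is stated for functions on R, be applied. *)
Definition clamp (t : R) : R := Rmax a (Rmin b t).

Lemma clamp_in (t : R) : a <= clamp t <= b.
Proof. unfold clamp, Rmax, Rmin. repeat destruct Rle_dec; lra. Qed.

Lemma clamp_id (t : R) : a <= t <= b -> clamp t = t.
Proof. unfold clamp, Rmax, Rmin. repeat destruct Rle_dec; lra. Qed.

Lemma clamp_lipschitz (s t : R) : Rabs (clamp s - clamp t) <= Rabs (s - t).
Proof.
  unfold clamp, Rmax, Rmin. repeat destruct Rle_dec;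
  apply Rabs_le; split; unfold Rabs; destruct Rcase_abs; lra.
Qed.

Definition Dclamp (t : R) : Dom a b := exist _ (clamp t) (clamp_in t).

Lemma Dclamp_proj (x : Dom a b) : Dclamp (proj1_sig x) = x.
Proof. destruct x as [t Ht]. apply subset_eq_compat, clamp_id, Ht. Qed.

Lemma Dcontinuous_norm_max (F : Dom a b -> V) :
  Dcontinuous F -> exists x0, forall y, norm (F y) <= norm (F x0).
Proof.
  intros HF.
  destruct (continuity_ab_maj (fun t => norm (F (Dclamp t))) a b hab)
    as [t0 [Hmax _]].
  - intros t _. apply continuity_pt_locally. intros eps.
    destruct (HF (Dclamp t) eps (cond_pos eps)) as [d [Hd H]].
    exists (mkposreal d Hd). intros s Hs.
    eapply Rle_lt_trans; [apply norm_triangle_inv|].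
    apply H. eapply Rle_lt_trans; [apply clamp_lipschitz | exact Hs].
  - exists (Dclamp t0). intros y. rewrite <- (Dclamp_proj y).
    apply Hmax, proj2_sig.
Qed.

End Domain.

Definition Ivec (u : Inum) : R * R := (ic u, ln (iw u)).

Definition Inum_of_vec (z : R * R) : Inum := mkI (fst z) (exp (snd z)) (exp_pos _).

Lemma Ivec_inj (u v : Inum) : Ivec u = Ivec v -> u = v.
Proof.
  destruct u as [c w Hw], v as [c' w' Hw']. unfold Ivec. simpl.
  intros [= -> Hln]. apply ln_inv in Hln; [|assumption..]. subst w'.
  f_equal. apply proof_irrelevance.
Qed.

Lemma Ivec_of_vec (z : R * R) : Ivec (Inum_of_vec z) = z.
Proof. destruct z as [x y]. unfold Ivec. simpl. now rewrite ln_exp. Qed.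

Lemma Ivec_Iadd (u v : Inum) : Ivec (Iadd u v) = plus (Ivec u) (Ivec v).
Proof. unfold Ivec. simpl. now rewrite ln_mult by apply iw_pos. Qed.

Lemma Ivec_Iscal (k : R) (u : Inum) : Ivec (Iscal k u) = scal k (Ivec u).
Proof. unfold Ivec. simpl. unfold Rpower. now rewrite ln_exp. Qed.

Lemma Ivec_Isub (u v : Inum) : Ivec (Isub u v) = minus (Ivec u) (Ivec v).
Proof. unfold Ivec. simpl. now rewrite ln_div by apply iw_pos. Qed.

Lemma Ivec_Izero : Ivec Izero = zero.
Proof. unfold Ivec. simpl. now rewrite ln_1. Qed.

Lemma Inorm_norm (u : Inum) : Inorm u = norm (Ivec u).
Proof.
  unfold Inorm. change (norm (Ivec u)) with
    (sqrt (Rabs (ic u) ^ 2 + Rabs (ln (iw u)) ^ 2)).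
  now rewrite !pow2_abs.
Qed.

Lemma Idist_norm (u v : Inum) : Idist u v = norm (minus (Ivec u) (Ivec v)).
Proof. unfold Idist. now rewrite Inorm_norm, Ivec_Isub. Qed.

Lemma Iadd_assoc (u v w : Inum) : Iadd u (Iadd v w) = Iadd (Iadd u v) w.
Proof. apply Ivec_inj. rewrite !Ivec_Iadd. exact (plus_assoc (Ivec u) (Ivec v) (Ivec w)). Qed.

Lemma Iadd_comm (u v : Inum) : Iadd u v = Iadd v u.
Proof. apply Ivec_inj. rewrite !Ivec_Iadd. exact (plus_comm (Ivec u) (Ivec v)). Qed.

Lemma Iadd_0_r (u : Inum) : Iadd u Izero = u.
Proof. apply Ivec_inj. rewrite Ivec_Iadd, Ivec_Izero. exact (plus_zero_r (Ivec u)). Qed.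

Lemma Iadd_opp_r (u : Inum) : Iadd u (Iscal (-1) u) = Izero.
Proof.
  apply Ivec_inj. rewrite Ivec_Iadd, Ivec_Iscal, Ivec_Izero.
  rewrite (scal_opp_one (Ivec u) : scal (-1) (Ivec u) = opp (Ivec u)).
  exact (plus_opp_r (Ivec u)).
Qed.

Lemma Iscal_distr_l (k : R) (u v : Inum) :
  Iscal k (Iadd u v) = Iadd (Iscal k u) (Iscal k v).
Proof. apply Ivec_inj. rewrite !Ivec_Iscal, !Ivec_Iadd, !Ivec_Iscal. exact (scal_distr_l k (Ivec u) (Ivec v)). Qed.

Lemma Iscal_distr_r (k l : R) (u : Inum) :
  Iscal (k + l) u = Iadd (Iscal k u) (Iscal l u).
Proof. apply Ivec_inj. rewrite Ivec_Iadd, !Ivec_Iscal. exact (scal_distr_r k l (Ivec u)). Qed.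

Lemma Iscal_assoc (k l : R) (u : Inum) : Iscal (k * l) u = Iscal k (Iscal l u).
Proof. apply Ivec_inj. rewrite !Ivec_Iscal. symmetry. exact (scal_assoc k l (Ivec u)). Qed.

Lemma Iscal_1_l (u : Inum) : Iscal 1 u = u.
Proof. apply Ivec_inj. rewrite Ivec_Iscal. exact (scal_one (Ivec u)). Qed.

Lemma Inorm_Iscal (k : R) (u : Inum) : Inorm (Iscal k u) = Rabs k * Inorm u.
Proof. rewrite !Inorm_norm, Ivec_Iscal. exact (norm_scal_R k (Ivec u)). Qed.

Lemma Inorm_Iadd_le (u v : Inum) : Inorm (Iadd u v) <= Inorm u + Inorm v.
Proof. rewrite !Inorm_norm, Ivec_Iadd. exact (norm_triangle (Ivec u) (Ivec v)). Qed.

Section IntervalFunctions.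

Variables a b : R.

Lemma Icontinuous_Ivec (f : IFun a b) :
  Icontinuous f <-> Dcontinuous a b (fun x => Ivec (f x)).
Proof. unfold Icontinuous, Dcontinuous. now setoid_rewrite Idist_norm. Qed.

Lemma Fzero_continuous : Icontinuous (@Fzero a b).
Proof. apply Icontinuous_Ivec. exact (Dcontinuous_const a b (Ivec Izero)). Qed.

Lemma Fadd_continuous (f g : IFun a b) :
  Icontinuous f -> Icontinuous g -> Icontinuous (Fadd f g).
Proof.
  rewrite !Icontinuous_Ivec. intros Hf Hg.
  replace (fun x => Ivec (Fadd f g x))
    with (fun x => plus (Ivec (f x)) (Ivec (g x)))
    by (extensionality x; symmetry; apply Ivec_Iadd).
  now apply Dcontinuous_plus.
Qed.

Lemma Fscal_continuous (k : R) (f : IFun a b) :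
  Icontinuous f -> Icontinuous (Fscal k f).
Proof.
  rewrite !Icontinuous_Ivec. intros Hf.
  replace (fun x => Ivec (Fscal k f x)) with (fun x => scal k (Ivec (f x)))
    by (extensionality x; symmetry; apply Ivec_Iscal).
  now apply Dcontinuous_scal.
Qed.

Lemma Fsub_continuous (f g : IFun a b) :
  Icontinuous f -> Icontinuous g -> Icontinuous (Fsub f g).
Proof.
  intros Hf Hg.
  replace (Fsub f g) with (Fadd f (Fscal (-1) g)).
  - now apply Fadd_continuous, Fscal_continuous.
  - extensionality x. apply Ivec_inj. unfold Fadd, Fscal, Fsub.
    rewrite Ivec_Iadd, Ivec_Iscal, Ivec_Isub.
    now rewrite (scal_opp_one (Ivec (g x)) : scal (-1) (Ivec (g x)) = opp (Ivec (g x))).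
Qed.

Hypothesis hab : a <= b.

Definition Dom_left : Dom a b := exist _ a (conj (Rle_refl a) hab).

Lemma Supnorm_lub (f : IFun a b) (M : R) :
  (forall x, Inorm (f x) <= M) ->
  (forall x, Inorm (f x) <= Supnorm f) /\
  (forall M', (forall x, Inorm (f x) <= M') -> Supnorm f <= M').
Proof.
  intros HM.
  set (E := fun y => exists x : Dom a b, y = Inorm (f x)).
  destruct (Lub_Rbar_correct E) as [Hub Hleast].
  assert (Hfin : is_finite (Lub_Rbar E)).
  { destruct (Lub_Rbar E) eqn:HE; [reflexivity | exfalso..].
    - apply (Hleast M). intros y [x ->]. apply HM.
    - exact (Hub _ (ex_intro _ Dom_left eq_refl)). }
  unfold Supnorm. fold E. rewrite <- Hfin in Hub, Hleast. split.
  - intros x. exact (Hub _ (ex_intro _ x eq_refl)).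
  - intros M' HM'. apply (Hleast M'). intros y [x ->]. apply HM'.
Qed.

Lemma Supnorm_le (f : IFun a b) (M : R) :
  (forall x, Inorm (f x) <= M) -> Supnorm f <= M.
Proof. intros HM. exact (proj2 (Supnorm_lub f M HM) M HM). Qed.

Lemma Supnorm_attained (f : IFun a b) (x0 : Dom a b) :
  (forall y, Inorm (f y) <= Inorm (f x0)) -> Supnorm f = Inorm (f x0).
Proof.
  intros Hx0. apply Rle_antisym; [now apply Supnorm_le|].
  exact (proj1 (Supnorm_lub f _ Hx0) x0).
Qed.

Lemma Supnorm_max (f : IFun a b) :
  Icontinuous f ->
  exists x, Supnorm f = Inorm (f x) /\ forall y, Inorm (f y) <= Supnorm f.
Proof.
  intros Hf. apply Icontinuous_Ivec in Hf.
  destruct (Dcontinuous_norm_max a b hab _ Hf) as [x0 Hx0].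
  setoid_rewrite <- Inorm_norm in Hx0.
  exists x0. rewrite (Supnorm_attained f x0 Hx0). split; [reflexivity | exact Hx0].
Qed.

Lemma Inorm_le_Supnorm (f : IFun a b) (x : Dom a b) :
  Icontinuous f -> Inorm (f x) <= Supnorm f.
Proof. intros Hf. destruct (Supnorm_max f Hf) as [x0 [_ Hub]]. apply Hub. Qed.

Lemma Supnorm_ge0 (f : IFun a b) : Icontinuous f -> 0 <= Supnorm f.
Proof.
  intros Hf. eapply Rle_trans; [apply sqrt_pos|].
  exact (Inorm_le_Supnorm f Dom_left Hf).
Qed.

Lemma Supnorm_eq0 (f : IFun a b) : Icontinuous f -> Supnorm f = 0 <-> f = Fzero.
Proof.
  intros Hf. split.
  - intros H0. extensionality x. apply Ivec_inj. unfold Fzero. rewrite Ivec_Izero.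
    apply (norm_eq_zero (Ivec (f x))). rewrite <- Inorm_norm. apply Rle_antisym.
    + rewrite <- H0. now apply Inorm_le_Supnorm.
    + apply sqrt_pos.
  - intros ->. rewrite (Supnorm_attained Fzero Dom_left (fun _ => Rle_refl _)).
    unfold Fzero. rewrite Inorm_norm, Ivec_Izero. exact norm_zero.
Qed.

Lemma Supnorm_Fscal (k : R) (f : IFun a b) :
  Icontinuous f -> Supnorm (Fscal k f) = Rabs k * Supnorm f.
Proof.
  intros Hf. destruct (Supnorm_max f Hf) as [x0 [Hx0 Hub]].
  rewrite Hx0, <- Inorm_Iscal.
  apply (Supnorm_attained (Fscal k f) x0). intros y. unfold Fscal. rewrite !Inorm_Iscal.
  apply Rmult_le_compat_l; [apply Rabs_pos|]. rewrite <- Hx0. apply Hub.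
Qed.

Lemma Supnorm_Fadd (f g : IFun a b) :
  Icontinuous f -> Icontinuous g -> Supnorm (Fadd f g) <= Supnorm f + Supnorm g.
Proof.
  intros Hf Hg. apply Supnorm_le. intros x.
  eapply Rle_trans; [apply Inorm_Iadd_le|].
  apply Rplus_le_compat; now apply Inorm_le_Supnorm.
Qed.

Lemma Icomplete (u : nat -> IFun a b) :
  (forall n, Icontinuous (u n)) ->
  (forall eps, 0 < eps -> exists N, forall m n, (N <= m)%nat -> (N <= n)%nat ->
     Supnorm (Fsub (u m) (u n)) < eps) ->
  exists f, Icontinuous f /\
    forall eps, 0 < eps -> exists N, forall n, (N <= n)%nat ->
      Supnorm (Fsub (u n) f) < eps.
Proof.
  intros Hu Hcauchy.
  (* [C] is [R * R]: this instance provides the completeness of R^2. *)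
  destruct (uniformly_Cauchy_limit (V := C_R_CompleteNormedModule)
    (fun n x => Ivec (u n x))) as [v Hv].
  { intros eps Heps. destruct (Hcauchy eps Heps) as [N HN].
    exists N. intros m n Hm Hn x.
    rewrite <- Ivec_Isub, <- Inorm_norm.
    eapply Rle_lt_trans; [|exact (HN m n Hm Hn)].
    apply (Inorm_le_Supnorm (Fsub (u m) (u n))). now apply Fsub_continuous. }
  set (f x := Inum_of_vec (v x)).
  assert (Hfv : forall x, Ivec (f x) = v x) by (intros x; apply Ivec_of_vec).
  exists f. split.
  - apply Icontinuous_Ivec, (Dcontinuous_uniform_limit a b (fun n x => Ivec (u n x))).
    + intros n. apply Icontinuous_Ivec, Hu.
    + intros eps Heps. destruct (Hv eps Heps) as [N HN].
      exists N. intros x. rewrite Hfv. now apply HN.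
  - intros eps Heps. destruct (Hv (eps / 2)) as [N HN]; [lra|].
    exists N. intros n Hn. apply Rle_lt_trans with (eps / 2); [|lra].
    apply Supnorm_le. intros x. unfold Fsub.
    rewrite Inorm_norm, Ivec_Isub, Hfv. now apply Rlt_le, HN.
Qed.

End IntervalFunctions.

Theorem theorem3p9 (a b : R) (hab : a < b) :
  (* the norm is a maximum over [a,b] *)
  (forall f : IFun a b, Icontinuous f ->
     exists x : Dom a b, Supnorm f = Inorm (f x) /\
       forall y : Dom a b, Inorm (f y) <= Supnorm f) /\
  (* C([a,b],R_I) is closed under the pointwise operations *)
  Icontinuous (@Fzero a b) /\
  (forall f g : IFun a b, Icontinuous f -> Icontinuous g -> Icontinuous (Fadd f g)) /\
  (forall (k : R) (f : IFun a b), Icontinuous f -> Icontinuous (Fscal k f)) /\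
  (* real vector space axioms *)
  (forall f g h : IFun a b, Icontinuous f -> Icontinuous g -> Icontinuous h ->
     Fadd f (Fadd g h) = Fadd (Fadd f g) h) /\
  (forall f g : IFun a b, Icontinuous f -> Icontinuous g -> Fadd f g = Fadd g f) /\
  (forall f : IFun a b, Icontinuous f -> Fadd f Fzero = f) /\
  (forall f : IFun a b, Icontinuous f -> Fadd f (Fscal (-1) f) = Fzero) /\
  (forall (k : R) (f g : IFun a b), Icontinuous f -> Icontinuous g ->
     Fscal k (Fadd f g) = Fadd (Fscal k f) (Fscal k g)) /\
  (forall (k l : R) (f : IFun a b), Icontinuous f ->
     Fscal (k + l) f = Fadd (Fscal k f) (Fscal l f)) /\
  (forall (k l : R) (f : IFun a b), Icontinuous f ->
     Fscal (k * l) f = Fscal k (Fscal l f)) /\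
  (forall f : IFun a b, Icontinuous f -> Fscal 1 f = f) /\
  (* norm axioms *)
  (forall f : IFun a b, Icontinuous f -> 0 <= Supnorm f) /\
  (forall f : IFun a b, Icontinuous f -> (Supnorm f = 0 <-> f = Fzero)) /\
  (forall (k : R) (f : IFun a b), Icontinuous f -> Supnorm (Fscal k f) = Rabs k * Supnorm f) /\
  (forall f g : IFun a b, Icontinuous f -> Icontinuous g ->
     Supnorm (Fadd f g) <= Supnorm f + Supnorm g) /\
  (* completeness: every Cauchy sequence converges in C([a,b],R_I) *)
  (forall u : nat -> IFun a b, (forall n, Icontinuous (u n)) ->
     (forall eps : R, 0 < eps -> exists N : nat, forall m n : nat,
        (N <= m)%nat -> (N <= n)%nat -> Supnorm (Fsub (u m) (u n)) < eps) ->
     exists f : IFun a b, Icontinuous f /\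
       forall eps : R, 0 < eps -> exists N : nat, forall n : nat,
         (N <= n)%nat -> Supnorm (Fsub (u n) f) < eps).
Proof.
  pose proof (Rlt_le _ _ hab) as hab_le.
  repeat match goal with |- _ /\ _ => split end.
  - exact (Supnorm_max a b hab_le).
  - exact (Fzero_continuous a b).
  - exact (Fadd_continuous a b).
  - exact (Fscal_continuous a b).
  - intros f g h _ _ _. extensionality x. apply Iadd_assoc.
  - intros f g _ _. extensionality x. apply Iadd_comm.
  - intros f _. extensionality x. apply Iadd_0_r.
  - intros f _. extensionality x. apply Iadd_opp_r.
  - intros k f g _ _. extensionality x. apply Iscal_distr_l.
  - intros k l f _. extensionality x. apply Iscal_distr_r.
  - intros k l f _. extensionality x. apply Iscal_assoc.
  - intros f _. extensionality x. apply Iscal_1_l.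
  - exact (Supnorm_ge0 a b hab_le).
  - exact (Supnorm_eq0 a b hab_le).
  - exact (Supnorm_Fscal a b hab_le).
  - exact (Supnorm_Fadd a b hab_le).
  - exact (Icomplete a b hab_le).
Qed.
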